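(* Let $P=\langle V,E,v_0\rangle$ be a CFA, let $\pi_1,\ldots,\pi_k$ be looping traces of $P$ with heads $v_1,\ldots,v_k$, let $\hat{\pi}_1,\ldots,\hat{\pi}_k$ be (possibly under-approximating) accelerators for them, and let $\hat{P}$ be the accelerated CFA obtained from $P$ by adding, for each $j$, a non-branching path from $v_j$ to $v_j$ labelled by $\hat{\pi}_j$. Then: (1) every trace of $P$ is subsumed by at least one trace of $\hat{P}$; (2) if $\rho_1$ is an accelerated trace accepted by $\hat{P}$ and $\langle\sigma_0,\sigma\rangle\in[\![\rho_1]\!]$, then there exists a trace $\rho_2$ accepted by $P$ with $\langle\sigma_0,\sigma\rangle\in[\![\rho_2]\!]$.
   Context: Programs are over a finite set of program variables; a state assigns a value to each variable. Statements are assignments $x:=e$, nondeterministic assignments $x:=*$, assumptions $[B]$ (identity restricted to states satisfying predicate $B$), and $\mathsf{skip}$; each statement $s$ denotes a relation $[\![s]\!]$ on states, and a trace (finite statement sequence) denotes the relational composition of its statements in order (empty trace: identity); $[\![\pi]\!]^0$ is the identity and $[\![\pi]\!]^n=[\![\pi]\!]\circ[\![\pi]\!]^{n-1}$. A CFA $P=\langle V,E,v_0\rangle$ has finite vertex set $V$, edges $E\subseteq V\times\mathsf{Stmts}_P\times V$ labelled with statements, and initial vertex $v_0$. A trace of a CFA is the label sequence of a path in it; it is looping with head $v$ if the path starts and ends at $v$, and accepted if the path starts at $v_0$. An accelerator for a looping trace $\pi$ is a statement sequence $\hat{\pi}$ with $[\![\hat{\pi}]\!]=\bigcup_{i\ge0}[\![\pi]\!]^i$;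 an under-approximating accelerator is a statement sequence $\hat{\pi}$ with a function $\beta$ from states to $\mathbb{N}_0$ such that $\langle\sigma,\sigma'\rangle\in[\![\hat{\pi}]\!]$ iff $\exists i\le\beta(\sigma)$ with $\langle\sigma,\sigma'\rangle\in[\![\pi]\!]^i$, where $\beta$ satisfies: $i\le\beta(\sigma)$ and $\langle\sigma,\sigma'\rangle\in[\![\pi]\!]^i$ imply $\beta(\sigma')\le\beta(\sigma)-i$. A trace of $\hat{P}$ is accelerated if it traverses one of the added accelerator paths. A trace $\rho$ is subsumed by a trace $\rho'$ if $[\![\rho]\!]\subseteq[\![\rho']\!]$. *)

From mathcomp Require Import all_boot.
From Stdlib Require List.
Set Implicit Arguments. Unset Strict Implicit. Unset Printing Implicit Defensive.

Section Programs.
Variables (Var : finType) (Val : Type).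

Definition state := Var -> Val.

Definition upd (s : state) (x : Var) (v : Val) : state :=
  fun y => if y == x then v else s y.

Inductive stmt :=
| Assign of Var & (state -> Val)
| Havoc of Var
| Assume of (state -> Prop)
| Skip.

Definition rel := state -> state -> Prop.

Definition sem_stmt (st : stmt) : rel :=
  match st with
  | Assign x e => fun s s' => s' = upd s x (e s)
  | Havoc x => fun s s' => forall y, y <> x -> s' y = s y
  | Assume B => fun s s' => s' = s /\ B s
  | Skip => fun s s' => s' = s
  end.

Fixpoint sem (t : seq stmt) : rel :=
  match t with
  | nil => fun s s' => s' = s
  | st :: t' => fun s s'' => exists s', sem_stmt st s s' /\ sem t' s' s''
  end.

Fixpoint sem_pow (t : seq stmt) (n : nat) : rel :=
  match n with
  | 0 => fun s s' => s' = s
  | n'.+1 => fun s s'' => exists s', sem t s s' /\ sem_pow t n' s' s''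
  end.

Definition subsumed (r r' : seq stmt) : Prop :=
  forall s s', sem r s s' -> sem r' s s'.

Definition accelerator (pi hat : seq stmt) : Prop :=
  forall s s', sem hat s s' <-> exists i, sem_pow pi i s s'.

Definition ua_accelerator (pi hat : seq stmt) : Prop :=
  exists beta : state -> nat,
    (forall s s', sem hat s s' <-> exists2 i, i <= beta s & sem_pow pi i s s') /\
    (forall s s' i, i <= beta s -> sem_pow pi i s s' -> beta s' <= beta s - i).

Record CFA (Vt : Type) := mkCFA {
  cfa_V : seq Vt;
  cfa_E : seq (Vt * stmt * Vt);
  cfa_v0 : Vt }.

Definition wf_CFA Vt (P : CFA Vt) : Prop :=
  List.In (cfa_v0 P) (cfa_V P) /\
  forall a st b, List.In (a, st, b) (cfa_E P) -> List.In a (cfa_V P) /\ List.In b (cfa_V P).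

Fixpoint is_path Vt (E : seq (Vt * stmt * Vt)) (u : Vt)
    (es : seq (Vt * stmt * Vt)) (w : Vt) : Prop :=
  match es with
  | nil => u = w
  | (a, st, b) :: es' => List.In (a, st, b) E /\ a = u /\ is_path E b es' w
  end.

Definition labels Vt (es : seq (Vt * stmt * Vt)) : seq stmt :=
  map (fun e => e.1.2) es.

Definition is_trace Vt (P : CFA Vt) (r : seq stmt) : Prop :=
  exists u w es, List.In u (cfa_V P) /\ is_path (cfa_E P) u es w /\ labels es = r.

Definition is_accepted Vt (P : CFA Vt) (r : seq stmt) : Prop :=
  exists w es, is_path (cfa_E P) (cfa_v0 P) es w /\ labels es = r.

Definition looping_trace Vt (P : CFA Vt) (r : seq stmt) (v : Vt) : Prop :=
  List.In v (cfa_V P) /\ exists es, is_path (cfa_E P) v es v /\ labels es = r.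

(** The accelerated CFA.  Vertices: inl v for the original ones, and
    inr (j, i), 1 <= i < size (hat j), for the intermediate vertices of the
    j-th accelerator path. *)
Section Accel.
Variables (Vt : Type) (P : CFA Vt) (k : nat) (hd : 'I_k -> Vt)
          (hat : 'I_k -> seq stmt).

Definition AVt := (Vt + ('I_k * nat))%type.

Definition acc_src (j : 'I_k) (i : nat) : AVt :=
  if i == 0 then inl (hd j) else inr (j, i).
Definition acc_tgt (j : 'I_k) (i : nat) : AVt :=
  if i.+1 == size (hat j) then inl (hd j) else inr (j, i.+1).

Definition acc_edges (j : 'I_k) : seq (AVt * stmt * AVt) :=
  [seq (acc_src j i, nth Skip (hat j) i, acc_tgt j i) | i <- iota 0 (size (hat j))].

Definition acc_verts (j : 'I_k) : seq AVt :=
  [seq inr (j, i) | i <- iota 1 (size (hat j)).-1].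

Definition accel_CFA : CFA AVt :=
  {| cfa_V := map inl (cfa_V P) ++ flatten [seq acc_verts j | j <- enum 'I_k];
     cfa_E := [seq (inl e.1.1, e.1.2, inl e.2) | e <- cfa_E P]
              ++ flatten [seq acc_edges j | j <- enum 'I_k];
     cfa_v0 := inl (cfa_v0 P) |}.

(** Traces of the accelerated CFA: paths between original vertices
    (accelerator paths are traversed entirely). *)
Definition hat_trace (r : seq stmt) : Prop :=
  exists u w es, List.In u (cfa_V P) /\
    is_path (cfa_E accel_CFA) (inl u) es (inl w) /\ labels es = r.

Definition hat_accepted (r : seq stmt) : Prop :=
  exists w es, is_path (cfa_E accel_CFA) (inl (cfa_v0 P)) es (inl w) /\ labels es = r.

Definition hat_accelerated (r : seq stmt) : Prop :=
  exists u w es, List.In u (cfa_V P) /\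
    is_path (cfa_E accel_CFA) (inl u) es (inl w) /\ labels es = r /\
    exists e j, List.In e es /\ List.In e (acc_edges j).

End Accel.
End Programs.

(** Part (1): the CFA [P] embeds into its acceleration, so every trace of [P]
    is itself a trace of the accelerated CFA.  Part (2): a path of the
    accelerated CFA is projected back to [P] by replacing each traversal of
    the [j]-th accelerator path by some number [n] of unrollings of the loop
    [pi j] around [hd j]; such an [n] exists because an (under-approximating)
    accelerator only relates states that are related by some power of
    [[pi j]].  The projection is built backwards along the path, and a
    partially traversed accelerator path is accounted for by the suffix of
    [hat j] that remains to be executed. *)
From mathcomp Require Import all_boot.
From Stdlib Require List.
Set Implicit Arguments. Unset Strict Implicit.

Section Semantics.
Variables (Var : finType) (Val : Type).
Local Notation stmt := (stmt Var Val).

Lemma sem_cat (a b : seq stmt) s s'' :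
  sem (a ++ b) s s'' <-> exists s', sem a s s' /\ sem b s' s''.
Proof.
elim: a s => [|st a IH] s /=; first by split=> [|[_ [-> //]]]; exists s.
split=> [[s1 [H1 /IH [s2 [H2 H3]]]] | [s2 [[s1 [H1 H2]] H3]]].
  by exists s2; split => //; exists s1.
by exists s1; split => //; apply/IH; exists s2.
Qed.

Lemma accelerator_sem_pow (pi hat : seq stmt) :
  accelerator pi hat \/ ua_accelerator pi hat ->
  forall s s', sem hat s s' -> exists n, sem_pow pi n s s'.
Proof.
move=> + s s'; case=> [Hacc /Hacc // | [beta [Hbeta _]] /Hbeta [n _ Hn]].
by exists n.
Qed.

End Semantics.

Section Paths.
Variables (Var : finType) (Val : Type) (Vt : Type).
Variable E : seq (Vt * stmt Var Val * Vt).

Lemma is_path_cat u es1 v es2 w :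
  is_path E u es1 v -> is_path E v es2 w -> is_path E u (es1 ++ es2) w.
Proof.
elim: es1 u => [|[[a st] b] es1 IH] u /=; first by move=> ->.
by move=> [Hin [Ha Hp]] Hq; do 2!split => //; apply: IH Hp Hq.
Qed.

Definition path_sem (u w : Vt) : state Var Val -> state Var Val -> Prop :=
  fun s0 s => exists2 es, is_path E u es w & sem (labels es) s0 s.

Lemma path_sem_refl w s : path_sem w w s s.
Proof. by exists [::]. Qed.

Lemma path_sem_cons u st v w s0 s1 s :
  List.In (u, st, v) E -> sem_stmt st s0 s1 -> path_sem v w s1 s ->
  path_sem u w s0 s.
Proof. by move=> Hin Hst [es Hp Hs]; exists ((u, st, v) :: es) => //; exists s1. Qed.

Lemma path_sem_trans u v w s0 s1 s :
  path_sem u v s0 s1 -> path_sem v w s1 s -> path_sem u w s0 s.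
Proof.
move=> [es1 Hp1 Hs1] [es2 Hp2 Hs2]; exists (es1 ++ es2).
  exact: is_path_cat Hp1 Hp2.
by rewrite /labels map_cat; apply/sem_cat; exists s1.
Qed.

Lemma path_sem_pow v pi n s0 s :
  (exists2 es, is_path E v es v & labels es = pi) ->
  sem_pow pi n s0 s -> path_sem v v s0 s.
Proof.
move=> [es Hp <-]; elim: n s0 => [|n IH] s0 /=; first by move=> ->; exact: path_sem_refl.
by move=> [s1 [Hs1 /IH]]; apply: path_sem_trans; exists es.
Qed.

End Paths.

Section Acceleration.
Variables (Var : finType) (Val : Type) (Vt : Type).
Variables (P : CFA Var Val Vt) (k : nat) (pi hat : 'I_k -> seq (stmt Var Val)).
Variable hd : 'I_k -> Vt.
Hypothesis loop_pi : forall j, looping_trace P (pi j) (hd j).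
Hypothesis accel_hat :
  forall j, accelerator (pi j) (hat j) \/ ua_accelerator (pi j) (hat j).

Local Notation E := (cfa_E P).
Local Notation E' := (cfa_E (accel_CFA P hd hat)).

Definition lift_edge (e : Vt * stmt Var Val * Vt) : AVt Vt k * stmt Var Val * AVt Vt k :=
  (inl e.1.1, e.1.2, inl e.2).

Lemma is_path_lift u es w :
  is_path E u es w -> is_path E' (inl u) (map lift_edge es) (inl w).
Proof.
elim: es u => [|[[a st] b] es IH] u /=; first by move=> ->.
move=> [Hin [<- Hp]]; split; last by split; [|apply: IH].
by apply: List.in_or_app; left; exact: (List.in_map lift_edge _ _ Hin).
Qed.

Lemma labels_lift es : labels (map lift_edge es) = labels es.
Proof. by rewrite /labels -map_comp. Qed.

Lemma accel_edgeP e :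
  List.In e E' ->
  (exists2 e0, List.In e0 E & e = lift_edge e0) \/
  (exists j i, i < size (hat j) /\
     e = (acc_src hd j i, nth (Skip _ _) (hat j) i, acc_tgt hd hat j i)).
Proof.
move=> Hin; case: (List.in_app_or _ _ _ Hin) =>
  [/List.in_map_iff [e0 [<- He0]] | /List.in_concat [es [Hes He]]].
  by left; exists e0.
right; case/List.in_map_iff: Hes => j [Hj _]; rewrite -Hj in He.
case/List.in_map_iff: He => i [<- /List.in_seq [_ /ltP Hi]].
by exists j, i.
Qed.

Lemma path_sem_hat j s0 s :
  sem (hat j) s0 s -> path_sem E (hd j) (hd j) s0 s.
Proof.
case/(accelerator_sem_pow (accel_hat j)) => n; apply: path_sem_pow.
by have [_ [es [Hp Hl]]] := loop_pi j; exists es.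
Qed.

Definition pending (j : 'I_k) (i : nat) (w : Vt) : state Var Val -> state Var Val -> Prop :=
  fun s0 s => exists2 s1, sem (drop i (hat j)) s0 s1 & path_sem E (hd j) w s1 s.

(** The invariant of the backward projection: from an inner vertex [(j, i)]
    of an accelerator path, the suffix [drop i (hat j)] is still owed before
    the path continues in [P] from [hd j]. *)
Definition residual (x : AVt Vt k) (w : Vt) : state Var Val -> state Var Val -> Prop :=
  match x with
  | inl u => path_sem E u w
  | inr (j, i) => pending j i w
  end.

Lemma pending_acc_tgt j i w s0 s :
  i < size (hat j) -> residual (acc_tgt hd hat j i) w s0 s -> pending j i.+1 w s0 s.
Proof.
rewrite /acc_tgt; case: eqP => [Hsz _ Hres | _ _ //].
by exists s0 => //; rewrite drop_oversize ?Hsz.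
Qed.

Lemma pending_step j i w s0 s1 s :
  i < size (hat j) -> sem_stmt (nth (Skip _ _) (hat j) i) s0 s1 ->
  pending j i.+1 w s1 s -> pending j i w s0 s.
Proof.
move=> Hi Hst [s2 Hs2 Hp]; exists s2 => //.
by rewrite (drop_nth (Skip _ _) Hi); exists s1.
Qed.

Lemma residual_acc_src j i w s0 s :
  pending j i w s0 s -> residual (acc_src hd j i) w s0 s.
Proof.
rewrite /acc_src; case: eqP => [-> [s1] | _ //].
by rewrite drop0 => /path_sem_hat; apply: path_sem_trans.
Qed.

Lemma residual_step x st y w s0 s1 s :
  List.In (x, st, y) E' -> sem_stmt st s0 s1 -> residual y w s1 s ->
  residual x w s0 s.
Proof.
case/accel_edgeP => [[[[a st0] b] Hin [-> -> ->]] | [j [i [Hi [-> -> ->]]]]].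
  exact: path_sem_cons Hin.
move=> Hst /(pending_acc_tgt Hi) Hpend.
exact/residual_acc_src/(pending_step Hi Hst).
Qed.

Lemma residual_path x es w s0 s :
  is_path E' x es (inl w) -> sem (labels es) s0 s -> residual x w s0 s.
Proof.
elim: es x s0 => [|[[a st] b] es IH] x s0 /=; first by move=> -> ->; exact: path_sem_refl.
move=> [Hin [<- Hp]] [s1 [Hst Hs]].
exact: residual_step Hin Hst (IH _ _ Hp Hs).
Qed.

End Acceleration.

Theorem theorem1 (Var : finType) (Val : Type) (Vt : Type)
    (P : CFA Var Val Vt) (k : nat)
    (pi hat : 'I_k -> seq (stmt Var Val)) (hd : 'I_k -> Vt) :
  wf_CFA P ->
  (forall j, looping_trace P (pi j) (hd j)) ->
  (forall j, accelerator (pi j) (hat j) \/ ua_accelerator (pi j) (hat j)) ->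
  (forall r, is_trace P r ->
     exists r', hat_trace P hd hat r' /\ subsumed r r') /\
  (forall r1 s0 s, hat_accepted P hd hat r1 -> hat_accelerated P hd hat r1 ->
     sem r1 s0 s ->
     exists r2, is_accepted P r2 /\ sem r2 s0 s).
Proof.
move=> _ loop_pi accel_hat; split.
  move=> r [u [w [es [Hu [Hp <-]]]]]; exists (labels es); split => //.
  exists u, w, (map (@lift_edge _ _ _ k) es).
  by rewrite labels_lift; split; [|split; [apply: is_path_lift|]].
move=> r1 s0 s [w [es [Hp <-]]] _ Hs.
have [es' Hp' Hs'] := residual_path loop_pi accel_hat Hp Hs.
by exists (labels es'); split => //; exists w, es'.
Qed.
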